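(* Let $P$ be the set of primes and $S_P$ the group of permutations of $P$. For $\sigma\in S_P$ let $\hat\sigma$ be the unique automorphism of the multiplicative monoid $(\mathbb Q,\cdot)$ extending $\sigma$ (with $\hat\sigma(\pm1)=\pm1$, $\hat\sigma(0)=0$), and let $\mathbb Q_\sigma=(\mathbb Q,\cdot,+_\sigma)$ where $a+_\sigma b=\hat\sigma^{-1}(\hat\sigma(a)+\hat\sigma(b))$. Let $V_1=\bigoplus_{\sigma\in S_P}\mathbb Q_\sigma$ and $V_2=\bigoplus_{\sigma\in S_P\setminus\{\mathrm{id}\}}\mathbb Q_\sigma$, each a near vector space over $F=\mathbb Q$ (with $q\in\mathbb Q$ acting on the summand $\mathbb Q_\sigma$ by multiplication by $q$, and addition on each summand being $+_\sigma$). Then $BT(V_1)\neq BT(V_2)$ but $\bar F\cap\mathrm{Aut}(V_1)=\bar F\cap\mathrm{Aut}(V_2)$.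
   Context: A near vector space over $F$: $(V,+)$ a group, $F$ a set of endomorphisms containing $0,1,-1$, with $F\setminus\{0\}$ a subgroup of $\mathrm{Aut}(V,+)$, acting fixed point freely ($\alpha x=\beta x\Rightarrow\alpha=\beta$ or $x=0$), such that the quasi-kernel $Q(V)=\{u: \forall\alpha,\beta\in F\,\exists\gamma\in F\ \alpha u+\beta u=\gamma u\}$ generates $V$. For commutative $F$, $V$ decomposes as a direct sum of blocks (maximal regular near vector subspaces, each nonzero element of $Q(V)$ lying in exactly one), block $B_i$ being a vector space over a field $(F,+_{u_i},\circ)$ where $\alpha+_{u}\beta$ is the unique $\gamma$ with $\alpha u+\beta u=\gamma u$ for nonzero $u\in Q(V)\cap B_i$. The block type $BT(V)$ is the set of operations $\{+_{u_i}\}$ (equality as sets of operations). $\bar F$ is the set of formal finite sums $\alpha_1+_\cdot\cdots+_\cdot\alpha_n$ of elements of $F$, acting on $V$ by $v\mapsto\alpha_1(v)+\cdots+\alpha_n(v)$; $\bar F\cap\mathrm{Aut}(V)$ is the set of formal sums acting as automorphisms of $(V,+)$. *)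

From HB Require Import structures.
From mathcomp Require Import all_boot all_order all_algebra.
From Stdlib Require List.
Set Implicit Arguments. Unset Strict Implicit. Unset Printing Implicit Defensive.
Import Order.TTheory GRing.Theory Num.Theory.
Local Open Scope ring_scope.

Definition Pr : Type := {p : nat | prime p}.

Record SP : Type := MkSP {
  sp_fun : Pr -> Pr;
  sp_inv : Pr -> Pr;
  sp_funK : cancel sp_fun sp_inv;
  sp_invK : cancel sp_inv sp_fun }.

Definition sp_id : SP := @MkSP id id (fun _ => erefl) (fun _ => erefl).
Definition sp_inverse (s : SP) : SP :=
  @MkSP (sp_inv s) (sp_fun s) (sp_invK s) (sp_funK s).

Definition sigma_nat (s : SP) (p : nat) : nat :=
  match @insub nat (fun n => prime n) Pr p with
  | Some q => val (sp_fun s q)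
  | None => p
  end.

Definition hatn (s : SP) (n : nat) : nat :=
  (\prod_(p <- primes n) (sigma_nat s p) ^ (logn p n))%N.

Definition hatq (s : SP) (q : rat) : rat :=
  if q == 0 then 0
  else (if q < 0 then -1 else 1) *
       ((hatn s (absz (numq q)))%:R / (hatn s (absz (denq q)))%:R).

Definition addsig (s : SP) (a b : rat) : rat :=
  hatq (sp_inverse s) (hatq s a + hatq s b).

Section Generic.
Variables (V : Type) (add : V -> V -> V) (zero : V) (act : rat -> V -> V).

Definition quasi_kernel (u : V) : Prop :=
  forall a b : rat, exists c : rat, add (act a u) (act b u) = act c u.

(** block type: the set of operations +_u, u nonzero in Q(V)
    (alpha +_u beta is the gamma with alpha u + beta u = gamma u). *)
Definition block_type (op : rat -> rat -> rat) : Prop :=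
  exists u : V, quasi_kernel u /\ u <> zero /\
    forall a b : rat, add (act a u) (act b u) = act (op a b) u.

Definition fsum_act (l : seq rat) (v : V) : V :=
  foldr (fun a acc => add (act a v) acc) zero l.

Definition Fbar_Aut (l : seq rat) : Prop :=
  bijective (fsum_act l) /\
  forall v w : V, fsum_act l (add v w) = add (fsum_act l v) (fsum_act l w).
End Generic.

Section DirectSum.
Variables (I : Type) (s : I -> SP).

Definition DS : Type :=
  {v : I -> rat | exists l : list I, forall i, ~ List.In i l -> v i = 0}.

Lemma addsig00 (t : SP) : addsig t 0 0 = 0.
Proof.
have h0 : forall t0 : SP, hatq t0 0 = 0 by move=> t0; rewrite /hatq eqxx.
by rewrite /addsig !h0.
Qed.

Definition ds_zero : DS := exist _ (fun _ => 0) (ex_intro _ nil (fun _ _ => erefl)).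

Definition ds_add (u v : DS) : DS.
Proof.
refine (exist _ (fun i => addsig (s i) (proj1_sig u i) (proj1_sig v i)) _).
case: u => [f [l1 H1]]; case: v => [g [l2 H2]] /=.
exists (l1 ++ l2) => i Hi.
rewrite H1 ?H2 ?addsig00 // => H; apply: Hi; apply: List.in_or_app; tauto.
Defined.

Definition ds_act (q : rat) (v : DS) : DS.
Proof.
refine (exist _ (fun i => q * proj1_sig v i) _).
case: v => [f [l H]] /=; exists l => i Hi; by rewrite H ?mulr0.
Defined.
End DirectSum.

Definition V1 : Type := DS SP.
Definition SPnid : Type := {s : SP | s <> sp_id}.
Definition V2 : Type := DS SPnid.

Definition BT1 : (rat -> rat -> rat) -> Prop := block_type (@ds_add SP (fun s => s)) (ds_zero SP) (@ds_act SP).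
Definition BT2 : (rat -> rat -> rat) -> Prop := block_type (@ds_add SPnid (fun s => proj1_sig s)) (ds_zero SPnid) (@ds_act SPnid).
Definition FA1 : seq rat -> Prop := Fbar_Aut (@ds_add SP (fun s => s)) (ds_zero SP) (@ds_act SP).
Definition FA2 : seq rat -> Prop := Fbar_Aut (@ds_add SPnid (fun s => proj1_sig s)) (ds_zero SPnid) (@ds_act SPnid).

From HB Require Import structures.
From mathcomp Require Import all_boot all_order all_algebra.
From Stdlib Require Import ClassicalEpsilon.
From Stdlib Require ProofIrrelevance FunctionalExtensionality Classical_Prop.
Set Implicit Arguments. Unset Strict Implicit. Unset Printing Implicit Defensive.
Import Order.TTheory GRing.Theory Num.Theory.

(* Since q in F acts on each summand by multiplication and hat sigma is
   multiplicative, a formal sum a_1 +. ... +. a_n acts on the sigma-coordinate as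
   multiplication by a_1 +_sigma ... +_sigma a_n; it is an automorphism iff this
   is nonzero for every sigma.  The rationals a_i involve finitely many primes,
   and a permutation sigma <> id fixing them fixes every a_i, so the summand
   sigma = id imposes no new condition.  On the other hand +_sigma = + makes
   hat sigma additive, hence the identity on the naturals and so on the primes:
   the addition of Q lies in BT(V_1) but not in BT(V_2). *)

Lemma eq_id_multiplicative (f : nat -> nat) n :
  (forall a b, (0 < a)%N -> (0 < b)%N -> f (a * b)%N = (f a * f b)%N) ->
  f 1%N = 1%N -> (0 < n)%N -> (forall p, prime p -> p %| n -> f p = p) ->
  f n = n.
Proof.
move=> fM f1; elim/ltn_ind: n => n IH n_gt0 fP.
have [|n_gt1|-> //] := ltngtP n 1; first by rewrite ltnNge n_gt0.
have [m Dn] := dvdnP (pdiv_dvd n); have p_pr := pdiv_prime n_gt1.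
move: (pdiv n) p_pr Dn => p p_pr Dn.
have m_gt0 : (0 < m)%N by move: n_gt0; rewrite Dn muln_gt0 => /andP[].
have m_dvd : m %| n by rewrite Dn dvdn_mulr.
have p_dvd : p %| n by rewrite Dn dvdn_mull.
rewrite Dn fM ?(prime_gt0 p_pr) // (fP p) // (IH m) // => [|q q_pr q_dvd].
- by rewrite Dn ltn_Pmulr ?prime_gt1.
- exact/fP/(dvdn_trans q_dvd).
Qed.

Lemma sigma_nat_val (s : SP) (q : Pr) : sigma_nat s (val q) = val (sp_fun s q).
Proof. by rewrite /sigma_nat valK. Qed.

Lemma sigma_nat_prime (s : SP) p : prime p -> prime (sigma_nat s p).
Proof. by move=> p_pr; rewrite /sigma_nat insubT /=; case: (sp_fun _ _). Qed.

Lemma sigma_natK (s : SP) p : prime p -> sigma_nat (sp_inverse s) (sigma_nat s p) = p.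
Proof.
move=> p_pr; have -> : p = val (Sub p p_pr : Pr) by [].
by rewrite !sigma_nat_val /= sp_funK.
Qed.

Lemma hatn_prod_iota (s : SP) n N : (n < N)%N ->
  hatn s n = (\prod_(0 <= q < N) sigma_nat s q ^ logn q n)%N.
Proof.
move=> lt_nN; rewrite (bigID (mem (primes n))) /= [X in (_ * X)%N]big1 ?muln1.
  rewrite -big_filter; apply/perm_big/uniq_perm.
  - exact: primes_uniq.
  - exact/filter_uniq/iota_uniq.
  move=> q; rewrite mem_filter mem_index_iota.
  have [|//] := boolP (q \in primes n); rewrite mem_primes => /and3P[_ n_gt0 q_dvd].
  by rewrite (leq_ltn_trans (dvdn_leq n_gt0 q_dvd)).
by move=> q; rewrite -logn_gt0 lt0n negbK => /eqP->.
Qed.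

Lemma hatnM (s : SP) m n : (0 < m)%N -> (0 < n)%N -> hatn s (m * n) = (hatn s m * hatn s n)%N.
Proof.
move=> m_gt0 n_gt0; pose N := (m * n).+1.
rewrite !(@hatn_prod_iota s _ N) ?ltnS ?leq_pmulr ?leq_pmull // -big_split /=.
by apply: eq_bigr => q _; rewrite lognM // expnD.
Qed.

Lemma hatn_gt0 (s : SP) n : (0 < hatn s n)%N.
Proof.
rewrite /hatn big_seq; apply: prodn_cond_gt0 => q; rewrite mem_primes => /and3P[q_pr _ _].
by rewrite expn_gt0 prime_gt0 ?sigma_nat_prime.
Qed.

Lemma hatn1 (s : SP) : hatn s 1 = 1%N.
Proof. by rewrite /hatn big_nil. Qed.

Lemma hatn_prime (s : SP) p : prime p -> hatn s p = sigma_nat s p.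
Proof. by move=> p_pr; rewrite /hatn primes_prime // big_seq1 logn_prime // eqxx expn1. Qed.

Lemma hatnK (s : SP) n : (0 < n)%N -> hatn (sp_inverse s) (hatn s n) = n.
Proof.
move=> n_gt0; apply: (@eq_id_multiplicative (fun m => hatn (sp_inverse s) (hatn s m)))
  => // [a b a_gt0 b_gt0||p p_pr _].
- by rewrite !hatnM ?hatn_gt0.
- by rewrite !hatn1.
- by rewrite !hatn_prime ?sigma_nat_prime ?sigma_natK.
Qed.

Lemma hatn_fix (s : SP) n : (0 < n)%N ->
  (forall p, prime p -> (p <= n)%N -> sigma_nat s p = p) -> hatn s n = n.
Proof.
move=> n_gt0 fix_s; apply: eq_id_multiplicative => // [a b||p p_pr p_dvd].
- exact: hatnM.
- exact: hatn1.
- by rewrite hatn_prime // fix_s // dvdn_leq.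
Qed.

Local Open Scope ring_scope.

Lemma rat_ind_pos (P : rat -> Prop) :
  P 0 -> (forall x, P x -> P (- x)) -> (forall x, 0 < x -> P x) -> forall x, P x.
Proof.
move=> P0 PN Ppos x; case: (ltrgt0P x) => [x_gt0|x_lt0|->] //; first exact: Ppos.
by rewrite -[x]opprK; apply/PN/Ppos; rewrite oppr_gt0.
Qed.

Lemma pos_ratE (x : rat) : 0 < x -> x = (absz (numq x))%:R / (absz (denq x))%:R.
Proof.
move=> x_gt0; rewrite -[x in LHS]divq_num_den.
have numE : numq x = (absz (numq x))%:Z by rewrite gtz0_abs ?numq_gt0.
have denE : denq x = (absz (denq x))%:Z by rewrite gtz0_abs ?denq_gt0.
by rewrite {1}numE {1}denE.
Qed.

Lemma numq_absz_gt0 (x : rat) : 0 < x -> (0 < absz (numq x))%N.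
Proof. by move=> x_gt0; rewrite absz_gt0 numq_eq0 gt_eqF. Qed.

Lemma denq_absz_gt0 (x : rat) : (0 < absz (denq x))%N.
Proof. by rewrite absz_gt0 denq_neq0. Qed.

Lemma hatq0 (s : SP) : hatq s 0 = 0.
Proof. by rewrite /hatq eqxx. Qed.

Lemma hatqN (s : SP) x : hatq s (- x) = - hatq s x.
Proof.
rewrite /hatq oppr_eq0 numqN denqN abszN oppr_lt0.
by case: (ltrgt0P x); rewrite ?mulN1r ?mul1r ?opprK ?oppr0.
Qed.

Lemma hatq_pos (s : SP) x : 0 < x ->
  hatq s x = (hatn s (absz (numq x)))%:R / (hatn s (absz (denq x)))%:R.
Proof. by move=> x_gt0; rewrite /hatq gt_eqF // ltNge ltW //= mul1r. Qed.

Lemma hatq_frac (s : SP) m n : (0 < m)%N -> (0 < n)%N ->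
  hatq s (m%:R / n%:R) = (hatn s m)%:R / (hatn s n)%:R.
Proof.
move=> m_gt0 n_gt0; have x_gt0 : 0 < m%:R / n%:R :> rat by rewrite divr_gt0 ?ltr0n.
rewrite hatq_pos //; set a := absz _; set b := absz _.
have a_gt0 : (0 < a)%N by exact: numq_absz_gt0.
have b_gt0 : (0 < b)%N by exact: denq_absz_gt0.
have /eqP : m%:R / n%:R = a%:R / b%:R :> rat by rewrite -pos_ratE.
rewrite eqr_div ?pnatr_eq0 -?lt0n // -!natrM eqr_nat => /eqP Emn.
apply/eqP; rewrite eqr_div ?pnatr_eq0 -?lt0n ?hatn_gt0 // -!natrM -!hatnM //.
by rewrite Emn mulnC.
Qed.

Lemma hatq_posM (s : SP) x y : 0 < x -> 0 < y -> hatq s (x * y) = hatq s x * hatq s y.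
Proof.
move=> x_gt0 y_gt0; rewrite (pos_ratE x_gt0) (pos_ratE y_gt0) mulf_div -!natrM.
have num_gt0 := numq_absz_gt0; have den_gt0 := denq_absz_gt0.
by rewrite !hatq_frac ?muln_gt0 ?num_gt0 ?den_gt0 // !hatnM ?num_gt0 // !natrM mulf_div.
Qed.

Lemma hatqM (s : SP) x y : hatq s (x * y) = hatq s x * hatq s y.
Proof.
elim/rat_ind_pos: x y => [y|x IHx y|x x_gt0 y]; first by rewrite mul0r hatq0 mul0r.
  by rewrite mulNr !hatqN IHx mulNr.
elim/rat_ind_pos: y => [|y IHy|y y_gt0]; first by rewrite mulr0 hatq0 mulr0.
  by rewrite mulrN !hatqN IHy mulrN.
exact: hatq_posM.
Qed.

Lemma hatqK (s : SP) x : hatq (sp_inverse s) (hatq s x) = x.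
Proof.
elim/rat_ind_pos: x => [|x IHx|x x_gt0]; first by rewrite !hatq0.
  by rewrite !hatqN IHx.
have [num_gt0 den_gt0] := (numq_absz_gt0 x_gt0, denq_absz_gt0 x).
rewrite {1}(pos_ratE x_gt0) !hatq_frac ?hatn_gt0 // !hatnK //.
by rewrite -pos_ratE.
Qed.

Lemma hatqVK (s : SP) x : hatq s (hatq (sp_inverse s) x) = x.
Proof. exact: (hatqK (sp_inverse s)). Qed.

Lemma hatq_fix (s : SP) N x :
  (forall p, prime p -> (p <= N)%N -> sigma_nat s p = p) ->
  (absz (numq x) <= N)%N -> (absz (denq x) <= N)%N -> hatq s x = x.
Proof.
move=> fix_s; elim/rat_ind_pos: x => [||x x_gt0 num_le den_le]; first by rewrite hatq0.
  by move=> x IHx; rewrite numqN denqN abszN hatqN => num_le den_le; rewrite IHx.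
have fix_le k : (k <= N)%N -> forall p, prime p -> (p <= k)%N -> sigma_nat s p = p.
  by move=> k_le p p_pr p_le; rewrite fix_s // (leq_trans p_le).
by rewrite hatq_pos // !hatn_fix ?numq_absz_gt0 ?denq_absz_gt0 -?pos_ratE //; exact: fix_le.
Qed.

Lemma sigma_nat_id p : sigma_nat sp_id p = p.
Proof. by rewrite /sigma_nat; case: insubP => //= q _ <-. Qed.

Lemma hatq_id x : hatq sp_id x = x.
Proof.
apply: (@hatq_fix _ (maxn (absz (numq x)) (absz (denq x)))) => [p _ _||].
- exact: sigma_nat_id.
- exact: leq_maxl.
- exact: leq_maxr.
Qed.

Lemma hatq1 (s : SP) : hatq s 1 = 1.
Proof. by have := hatq_frac s (ltn0Sn 0) (ltn0Sn 0); rewrite hatn1 !divr1. Qed.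

Lemma hatq_nat_prime (s : SP) p : prime p -> hatq s p%:R = (sigma_nat s p)%:R.
Proof.
move=> p_pr; have := hatq_frac s (prime_gt0 p_pr) (ltn0Sn 0).
by rewrite hatn1 hatn_prime // !divr1.
Qed.

Lemma addsigMr (s : SP) a b c : addsig s (a * c) (b * c) = addsig s a b * c.
Proof. by rewrite /addsig !hatqM -mulrDl hatqM hatqK. Qed.

Lemma addsig_id a b : addsig sp_id a b = a + b.
Proof. by rewrite /addsig !hatq_id. Qed.

Lemma sp_eq_id (s : SP) : sp_fun s =1 id -> s = sp_id.
Proof.
case: s => f g fK gK /= /FunctionalExtensionality.functional_extensionality ef.
subst f; have eg : g = id.
  by apply: FunctionalExtensionality.functional_extensionality => x; apply: fK.
by subst g; congr MkSP; apply: ProofIrrelevance.proof_irrelevance.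
Qed.

Lemma addsig_eq_add (s : SP) : (forall a b, addsig s a b = a + b) -> s = sp_id.
Proof.
move=> addsE.
have hatqD a b : hatq s (a + b) = hatq s a + hatq s b.
  by rewrite -addsE /addsig hatqVK.
have hatq_nat n : hatq s n%:R = n%:R.
  by elim: n => [|n IHn]; rewrite ?hatq0 // mulrS hatqD hatq1 IHn.
apply: sp_eq_id => q; apply: val_inj; apply/eqP.
by rewrite -(eqr_nat rat) -sigma_nat_val -hatq_nat_prime ?(valP q) // hatq_nat.
Qed.

Definition transp (a b x : Pr) : Pr := if x == a then b else if x == b then a else x.

Lemma transpK a b : involutive (transp a b).
Proof.
move=> x; rewrite /transp.
have [->|xa] := eqVneq x a; first by case: (eqVneq b a) => [->|ba]; rewrite ?eqxx // ba eqxx.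
have [->|xb] := eqVneq x b; first by rewrite eqxx.
by rewrite (negbTE xa) (negbTE xb).
Qed.

Definition sp_transp (a b : Pr) : SP := MkSP (transpK a b) (transpK a b).

Lemma exists_nonid_fix_below N : exists2 s : SP, s <> sp_id &
  forall p, prime p -> (p <= N)%N -> sigma_nat s p = p.
Proof.
have [p1 N_lt_p1 p1_pr] := prime_above N; have [p2 p1_lt_p2 p2_pr] := prime_above p1.
pose a : Pr := Sub p1 p1_pr; pose b : Pr := Sub p2 p2_pr.
exists (sp_transp a b).
  move=> /(congr1 (fun t => val (sp_fun t a))); rewrite /= /transp eqxx /= => p21.
  by move: p1_lt_p2; rewrite p21 ltnn.
move=> p p_pr p_le; have -> : p = val (Sub p p_pr : Pr) by [].
rewrite sigma_nat_val /= /transp.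
have [/(congr1 val)/= pa|_] := eqVneq (Sub p p_pr : Pr) a.
  by move: N_lt_p1; rewrite -pa ltnNge p_le.
have [/(congr1 val)/= pb|//] := eqVneq (Sub p p_pr : Pr) b.
by move: (ltn_trans N_lt_p1 p1_lt_p2); rewrite -pb ltnNge p_le.
Qed.

Section DirectSumTheory.
Variables (I : Type) (s : I -> SP).

Local Notation fsum := (fsum_act (@ds_add I s) (ds_zero I) (@ds_act I)).

Lemma ds_ext (u v : DS I) : proj1_sig u =1 proj1_sig v -> u = v.
Proof.
case: u v => [f f_fin] [g g_fin] /= /FunctionalExtensionality.functional_extensionality fg.
by subst g; congr exist; apply: ProofIrrelevance.proof_irrelevance.
Qed.

Lemma ds_neq0 (u : DS I) : u <> ds_zero I -> exists i, proj1_sig u i != 0.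
Proof.
move=> u_neq0; apply: Classical_Prop.NNPP => no_support; apply/u_neq0/ds_ext => i /=.
by apply/eqP/contraT => ui_neq0; case: no_support; exists i.
Qed.

Definition ds_unit_fun (i j : I) : rat :=
  if excluded_middle_informative (j = i) then 1 else 0.

Lemma ds_unit_fin i : exists l : list I, forall j, ~ List.In j l -> ds_unit_fun i j = 0.
Proof.
exists [:: i] => j j_notin; rewrite /ds_unit_fun.
by case: excluded_middle_informative => // ji; case: j_notin; left.
Qed.

Definition ds_unit (i : I) : DS I := exist _ (ds_unit_fun i) (ds_unit_fin i).

Lemma ds_unit_coord i : proj1_sig (ds_unit i) i = 1.
Proof. by rewrite /= /ds_unit_fun; case: excluded_middle_informative. Qed.

Lemma ds_unit_coord_neq i j : j <> i -> proj1_sig (ds_unit i) j = 0.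
Proof. by rewrite /= /ds_unit_fun; case: excluded_middle_informative. Qed.

Lemma ds_unit_neq0 i : ds_unit i <> ds_zero I.
Proof. by move=> /(congr1 (fun v => proj1_sig v i))/eqP; rewrite ds_unit_coord oner_eq0. Qed.

Lemma ds_add_act a b (u : DS I) i :
  proj1_sig (ds_add s (ds_act a u) (ds_act b u)) i = addsig (s i) a b * proj1_sig u i.
Proof. exact: addsigMr. Qed.

Definition fsum_coef (t : SP) (l : seq rat) : rat :=
  hatq (sp_inverse t) (\sum_(a <- l) hatq t a).

Lemma fsum_coef_eq0 (t : SP) l : (fsum_coef t l == 0) = (\sum_(a <- l) hatq t a == 0).
Proof.
apply/eqP/eqP => [coef0|sum0]; last by rewrite /fsum_coef sum0 hatq0.
by rewrite -[LHS](hatqVK t) -/(fsum_coef t l) coef0 hatq0.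
Qed.

Lemma fsum_act_coord l (v : DS I) i :
  proj1_sig (fsum l v) i = fsum_coef (s i) l * proj1_sig v i.
Proof.
elim: l => [|a l IHl] /=; first by rewrite /fsum_coef big_nil hatq0 mul0r.
by rewrite IHl addsigMr /addsig /fsum_coef hatqVK big_cons.
Qed.

Lemma fsum_act_additive l (v w : DS I) : fsum l (ds_add s v w) = ds_add s (fsum l v) (fsum l w).
Proof.
apply: ds_ext => i; rewrite /= !fsum_act_coord /=.
by rewrite [LHS]mulrC -addsigMr ![_ * fsum_coef _ _]mulrC.
Qed.

Lemma fsum_act_bijective l :
  bijective (fsum l) <-> forall i, \sum_(a <- l) hatq (s i) a != 0.
Proof.
split=> [[g fsumK _] i|coef_neq0].
  rewrite -fsum_coef_eq0; apply/eqP => coef0; apply: (@ds_unit_neq0 i).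
  apply: (can_inj fsumK); apply: ds_ext => j.
  rewrite !fsum_act_coord mulr0.
  case: (Classical_Prop.classic (j = i)) => [->|ji]; first by rewrite coef0 mul0r.
  by rewrite ds_unit_coord_neq // mulr0.
have {}coef_neq0 i : fsum_coef (s i) l != 0 by rewrite fsum_coef_eq0.
pose g_fun (v : DS I) j := proj1_sig v j / fsum_coef (s j) l.
have g_fin v : exists l0 : list I, forall j, ~ List.In j l0 -> g_fun v j = 0.
  by case: v => f [l0 f_fin]; exists l0 => j j_notin; rewrite /g_fun /= f_fin ?mul0r.
exists (fun v => exist _ (g_fun v) (g_fin v)) => v; apply: ds_ext => i.
  by rewrite /= /g_fun fsum_act_coord mulrC mulKf.
by rewrite fsum_act_coord /= /g_fun mulrC divfK.
Qed.

Lemma Fbar_AutP l :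
  Fbar_Aut (@ds_add I s) (ds_zero I) (@ds_act I) l <->
  forall i, \sum_(a <- l) hatq (s i) a != 0.
Proof.
rewrite -fsum_act_bijective; split=> [[]//|fsum_bij]; split=> //.
exact: fsum_act_additive.
Qed.

End DirectSumTheory.

Lemma exists_nonid_fix_seq (l : seq rat) :
  exists2 t : SP, t <> sp_id & {in l, forall a, hatq t a = a}.
Proof.
pose N := (\max_(a <- l) maxn (absz (numq a)) (absz (denq a)))%N.
have [t t_neq fix_t] := exists_nonid_fix_below N; exists t => // a a_in.
have a_le : (maxn (absz (numq a)) (absz (denq a)) <= N)%N.
  exact: (@leq_bigmax_seq _ l xpredT (fun a : rat => maxn (absz (numq a)) (absz (denq a)))).
by apply: (hatq_fix fix_t); apply: leq_trans a_le; rewrite ?leq_maxl ?leq_maxr.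
Qed.

Lemma FA1_iff_FA2 l : FA1 l <-> FA2 l.
Proof.
split=> /Fbar_AutP sum_neq0; apply/Fbar_AutP; first by case=> t t_neq; exact: sum_neq0.
move=> t; case: (Classical_Prop.classic (t = sp_id)) => [->|t_neq]; last exact: (sum_neq0 (exist _ t t_neq)).
have [t' t'_neq fix_t'] := exists_nonid_fix_seq l.
have := sum_neq0 (exist _ t' t'_neq); rewrite /= (eq_big_seq _ fix_t').
by rewrite (eq_bigr _ (fun a _ => hatq_id a)).
Qed.

Lemma BT1_add : BT1 +%R.
Proof.
have unit_add a b : ds_add id (ds_act a (ds_unit sp_id)) (ds_act b (ds_unit sp_id))
                    = ds_act (a + b) (ds_unit sp_id).
  apply: ds_ext => t; rewrite ds_add_act.
  case: (Classical_Prop.classic (t = sp_id)) => [->|t_neq]; first by rewrite addsig_id.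
  by rewrite -[RHS]/((a + b) * proj1_sig (ds_unit sp_id) t) ds_unit_coord_neq // !mulr0.
exists (ds_unit sp_id); split; first by move=> a b; exists (a + b).
by split; [exact: ds_unit_neq0 | exact: unit_add].
Qed.

Lemma BT2_addN : ~ BT2 +%R.
Proof.
move=> [u [_ [/ds_neq0 [[t t_neq] ut_neq0] u_add]]]; apply: (t_neq).
apply: addsig_eq_add => a b; apply: (mulIf ut_neq0).
by have := congr1 (fun v => proj1_sig v (exist _ t t_neq)) (u_add a b); rewrite ds_add_act.
Qed.

Theorem mainTheorem9 :
  ~ (forall op : rat -> rat -> rat, BT1 op <-> BT2 op) /\
  (forall l : seq rat, FA1 l <-> FA2 l).
Proof.
split; last exact: FA1_iff_FA2.
by move=> BT_eq; apply: BT2_addN; apply/BT_eq/BT1_add.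
Qed.
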